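(* Let $\mathcal{X},\mathcal{Y}\subset\mathbb{R}^d$ be finite sets in coupled general position and let $Q=Q_{\mathcal{X}}\sqcup Q_{\mathcal{Y}}$ be a simplex of $\mathcal{A}^{\mathrm{co}}_\infty(\mathcal{X},\mathcal{Y})$ with $|Q|=m+1$, $Q_{\mathcal{X}}=\{x_1,\dots,x_l\}\subset\mathcal{X}$ and $Q_{\mathcal{Y}}=\{y_1,\dots,y_{m-l+1}\}\subset\mathcal{Y}$ both nonempty. Consider the relaxed problem $$r_{\mathrm{rel}}^2(Q)=\min_{c\in\mathbb{R}^d}\max\{\|c-x_1\|^2,\|c-y_1\|^2\}\quad\text{subject to } Ac=b,$$ where $A$ is the matrix with rows $(x_2-x_1)^T,\dots,(x_l-x_1)^T,(y_2-y_1)^T,\dots,(y_{m-l+1}-y_1)^T$ and $b=\tfrac12\big(\|x_2\|^2-\|x_1\|^2,\dots,\|x_l\|^2-\|x_1\|^2,\|y_2\|^2-\|y_1\|^2,\dots,\|y_{m-l+1}\|^2-\|y_1\|^2\big)^T$ (so $Ac=b$ says $c$ is equidistant from all points of $Q_{\mathcal{X}}$ and equidistant from all points of $Q_{\mathcal{Y}}$). Let $c_0$ satisfy $Ac_0=b$, let $F\in\mathbb{R}^{d\times(d-m+1)}$ have orthonormal columns forming a basis of $\ker A$, and set $s_x=F^T(x_1-c_0)$, $s_y=F^T(y_1-c_0)$, and $r_x(x_1)=\|Fs_x+c_0-x_1\|$, $r_x(y_1)=\|Fs_x+c_0-y_1\|$, $r_y(x_1)=\|Fs_y+c_0-x_1\|$,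 $r_y(y_1)=\|Fs_y+c_0-y_1\|$. Then $$r_{\mathrm{rel}}(Q)=\begin{cases} r_x(x_1) & \text{if } r_x(x_1)\ge r_x(y_1),\\ r_y(y_1) & \text{if } r_y(x_1)\le r_y(y_1),\\ R(Q) & \text{otherwise},\end{cases}$$ where $R(Q)$ is the radius of the minimal circumsphere of $Q$ in $\mathbb{R}^d$ (the smallest sphere in $\mathbb{R}^d$ passing through all points of $Q$).
   Context: For finite $\mathcal{Z}\subset\mathbb{R}^d$, $\mathrm{Vor}(z,\mathcal{Z})=\{w:\|z-w\|\le\|z'-w\|\ \forall z'\in\mathcal{Z}\}$. $\mathcal{A}^{\mathrm{co}}_\infty(\mathcal{X},\mathcal{Y})$ is the abstract simplicial complex on the disjoint union of $\mathcal{X}$ and $\mathcal{Y}$ consisting of all $Q=Q_{\mathcal{X}}\sqcup Q_{\mathcal{Y}}$ with $\bigcap_{x\in Q_{\mathcal{X}}}\mathrm{Vor}(x,\mathcal{X})\cap\bigcap_{y\in Q_{\mathcal{Y}}}\mathrm{Vor}(y,\mathcal{Y})\ne\emptyset$. A finite $P\subset\mathbb{R}^d$ is in general position if for every $Q\subset P$ with $|Q|=d+1$ the points of $Q$ do not lie on a $(d-1)$-dimensional affine flat and no point of $P\setminus Q$ lies on the circumsphere of $Q$. $P_1,P_2$ are in coupled general position if each is in general position and, with $\hat P_1=P_1\times\{0\}$, $\hat P_2=P_2\times\{1\}\subset\mathbb{R}^{d+1}$, for all $\hat Q_1\subset\hat P_1,\hat Q_2\subset\hat P_2$ with $|\hat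 Q_1\cup\hat Q_2|=d+2$, no point of $(\hat P_1\setminus\hat Q_1)\cup(\hat P_2\setminus\hat Q_2)$ lies on the circumsphere of $\hat Q_1\cup\hat Q_2$. Under these assumptions the rows of $A$ are linearly independent. *)

From HB Require Import structures.
From mathcomp Require Import all_boot all_order all_algebra.
From mathcomp Require Import classical_sets boolp reals.
Set Implicit Arguments. Unset Strict Implicit. Unset Printing Implicit Defensive.
Import Order.TTheory GRing.Theory Num.Theory.
Local Open Scope ring_scope.
Local Open Scope classical_set_scope.

Section Defs.
Variable R : realType.

Definition norm2 {n} (v : 'cV[R]_n) : R := \sum_(i < n) v i 0 ^+ 2.
Definition enorm {n} (v : 'cV[R]_n) : R := Num.sqrt (norm2 v).

Definition Vor {n} (z : 'cV[R]_n) (Z : seq 'cV[R]_n) : set 'cV[R]_n :=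
  [set w | forall z', z' \in Z -> enorm (z - w) <= enorm (z' - w)].

Definition on_hyperplane {n} (S : seq 'cV[R]_n) : Prop :=
  exists (a : 'cV[R]_n) (beta : R), a != 0 /\
    forall q, q \in S -> (a^T *m q) 0 0 = beta.

Definition on_circumsphere {n} (S : seq 'cV[R]_n) (p : 'cV[R]_n) : Prop :=
  exists (c : 'cV[R]_n) (r : R),
    (forall q, q \in S -> enorm (c - q) = r) /\ enorm (c - p) = r.

Definition general_position {n} (P : seq 'cV[R]_n) : Prop :=
  forall Q : seq 'cV[R]_n, uniq Q -> {subset Q <= P} -> size Q = n.+1 ->
    ~ on_hyperplane Q /\
    (forall p, p \in P -> p \notin Q -> ~ on_circumsphere Q p).

Definition hlift {n} (t : R) (p : 'cV[R]_n) : 'cV[R]_(n + 1) :=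
  col_mx p (const_mx t).

Definition coupled_general_position {n} (P1 P2 : seq 'cV[R]_n) : Prop :=
  general_position P1 /\ general_position P2 /\
  forall Q1 Q2 : seq 'cV[R]_n,
    uniq Q1 -> uniq Q2 -> {subset Q1 <= P1} -> {subset Q2 <= P2} ->
    size Q1 + size Q2 = n.+2 ->
    let hQ := map (hlift 0) Q1 ++ map (hlift 1) Q2 in
    (forall p, p \in P1 -> p \notin Q1 -> ~ on_circumsphere hQ (hlift 0 p)) /\
    (forall p, p \in P2 -> p \notin Q2 -> ~ on_circumsphere hQ (hlift 1 p)).

(* Q = {x_0..x_l} (from X) ⊔ {y_0..y_k} (from Y) is a simplex of A^co_oo(X,Y) *)
Definition cosimplex {n l k} (X Y : seq 'cV[R]_n)
    (x : 'I_l.+1 -> 'cV[R]_n) (y : 'I_k.+1 -> 'cV[R]_n) : Prop :=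
  injective x /\ injective y /\ (forall i, x i \in X) /\ (forall j, y j \in Y) /\
  exists w, (forall i, Vor (x i) X w) /\ (forall j, Vor (y j) Y w).

Definition Amat {n l k} (x : 'I_l.+1 -> 'cV[R]_n) (y : 'I_k.+1 -> 'cV[R]_n)
    : 'M[R]_(l + k, n) :=
  col_mx (\matrix_(i < l) (x (lift ord0 i) - x ord0)^T)
         (\matrix_(j < k) (y (lift ord0 j) - y ord0)^T).

Definition bvec {n l k} (x : 'I_l.+1 -> 'cV[R]_n) (y : 'I_k.+1 -> 'cV[R]_n)
    : 'cV[R]_(l + k) :=
  col_mx (\col_(i < l) (2^-1 * (norm2 (x (lift ord0 i)) - norm2 (x ord0))))
         (\col_(j < k) (2^-1 * (norm2 (y (lift ord0 j)) - norm2 (y ord0)))).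

Definition rrel {n l k} (x : 'I_l.+1 -> 'cV[R]_n) (y : 'I_k.+1 -> 'cV[R]_n) : R :=
  Num.sqrt (inf [set Num.max (norm2 (c - x ord0)) (norm2 (c - y ord0)) |
                 c in [set c | Amat x y *m c = bvec x y]]).

Definition Rcirc {n l k} (x : 'I_l.+1 -> 'cV[R]_n) (y : 'I_k.+1 -> 'cV[R]_n) : R :=
  inf [set r | exists c : 'cV[R]_n,
          (forall i, enorm (c - x i) = r) /\ (forall j, enorm (c - y j) = r)].

End Defs.

From HB Require Import structures.
From mathcomp Require Import all_boot all_order all_algebra.
From mathcomp Require Import classical_sets reals.
From mathcomp Require Import ring lra.
Set Implicit Arguments. Unset Strict Implicit. Unset Printing Implicit Defensive.
Import Order.TTheory GRing.Theory Num.Theory.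
Local Open Scope ring_scope.

(* For c on the affine flat {Ac = b} = c0 + im F, Pythagoras gives
   |c - p|^2 = |c - pi p|^2 + |pi p - p|^2, where pi p = F F^T (p - c0) + c0
   is the orthogonal projection onto the flat.  A point cs of the flat minimises
   f(c) = max(|c - x1|^2, |c - y1|^2) as soon as some t in [0,1] makes
   (1 - t)(cs - x1) + t(cs - y1) orthogonal to the flat with complementary
   slackness, because then (1 - t)|c - x1|^2 + t|c - y1|^2 = |c - cs|^2 + f(cs)
   on the flat.  The multiplier is t = 0 at cs = pi x1 in the first case, t = 1
   at cs = pi y1 in the second, and otherwise cs is the point of the segment
   [pi x1, pi y1] equidistant from x1 and y1; being on the flat it is
   equidistant from all of Q, and every centre of a sphere through Q is a
   feasible point with f = radius^2, so cs is the centre of the smallest one. *)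

Section Norm2.
Variables (R : realType) (n : nat).
Implicit Types (u v w c cs p q : 'cV[R]_n) (a t : R).

Definition dot u v : R := \sum_(i < n) u i 0 * v i 0.

Lemma dotE u v : dot u v = (u^T *m v) 0 0.
Proof. by rewrite mxE; apply: eq_bigr => i _; rewrite mxE. Qed.

Lemma dotC u v : dot u v = dot v u.
Proof. by apply: eq_bigr => i _; rewrite mulrC. Qed.

Lemma dotDr u v w : dot u (v + w) = dot u v + dot u w.
Proof. by rewrite /dot -big_split; apply: eq_bigr => i _; rewrite mxE mulrDr. Qed.

Lemma dotZr a u v : dot u (a *: v) = a * dot u v.
Proof. by rewrite /dot mulr_sumr; apply: eq_bigr => i _; rewrite mxE mulrCA. Qed.

Lemma dotNr u v : dot u (- v) = - dot u v.
Proof. by rewrite -scaleN1r dotZr mulN1r. Qed.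

Lemma norm2_ge0 u : 0 <= norm2 u.
Proof. by rewrite sumr_ge0 // => i _; rewrite sqr_ge0. Qed.

Lemma norm2D u v : norm2 (u + v) = norm2 u + 2 * dot u v + norm2 v.
Proof.
rewrite /norm2 /dot mulr_sumr -!big_split /=; apply: eq_bigr => i _.
by rewrite mxE; ring.
Qed.

Lemma norm2Z a u : norm2 (a *: u) = a ^+ 2 * norm2 u.
Proof. by rewrite /norm2 mulr_sumr; apply: eq_bigr => i _; rewrite mxE exprMn. Qed.

Lemma norm2N u : norm2 (- u) = norm2 u.
Proof. by rewrite -scaleN1r norm2Z sqrrN expr1n mul1r. Qed.

Lemma norm2B u v : norm2 (u - v) = norm2 u - 2 * dot u v + norm2 v.
Proof. by rewrite norm2D dotNr norm2N mulrN. Qed.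

Lemma ler_enorm u v : (enorm u <= enorm v) = (norm2 u <= norm2 v).
Proof. by rewrite ler_sqrt ?norm2_ge0. Qed.

Lemma enorm_eq_norm2 u v : enorm u = enorm v -> norm2 u = norm2 v.
Proof. by move=> /eqP; rewrite eqr_sqrt ?norm2_ge0 // => /eqP. Qed.

Lemma convex_norm2_recenter c cs p q t :
  (1 - t) * norm2 (c - p) + t * norm2 (c - q) =
  norm2 (c - cs) + 2 * dot (c - cs) ((1 - t) *: (cs - p) + t *: (cs - q)) +
  ((1 - t) * norm2 (cs - p) + t * norm2 (cs - q)).
Proof.
have split_at r : c - r = (c - cs) + (cs - r) by rewrite addrA subrK.
by rewrite dotDr !dotZr [c - p]split_at [c - q]split_at !norm2D; ring.
Qed.

Definition maxdist2 p q c : R := Num.max (norm2 (c - p)) (norm2 (c - q)).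

Lemma maxdist2C p q c : maxdist2 p q c = maxdist2 q p c.
Proof. exact: maxC. Qed.

End Norm2.

Lemma convex_le_max (R : realDomainType) (a b t : R) :
  0 <= t <= 1 -> (1 - t) * a + t * b <= Num.max a b.
Proof.
case/andP=> t0 t1; have aM : a <= Num.max a b by rewrite le_max lexx.
have bM : b <= Num.max a b by rewrite le_max lexx orbT.
nra.
Qed.

Section Flat.
Variables (R : realType) (n r : nat) (F : 'M[R]_(n, r)) (c0 : 'cV[R]_n).
Implicit Types (a b c cs p q : 'cV[R]_n).

Definition flat : set 'cV[R]_n := [set c | exists s, c = F *m s + c0].

Definition proj p : 'cV[R]_n := F *m (F^T *m (p - c0)) + c0.

Lemma flat_proj p : flat (proj p).
Proof. by exists (F^T *m (p - c0)). Qed.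

Lemma flat_subP c c' : flat c -> flat c' -> exists s, c - c' = F *m s.
Proof.
move=> [s ->] [s' ->]; exists (s - s').
by rewrite mulmxBr opprD addrACA subrr addr0.
Qed.

Lemma flat_segment a b t : flat a -> flat b -> flat (a + t *: (b - a)).
Proof.
move=> fa fb; have [u ->] := flat_subP fb fa; case: fa => s ->.
by exists (s + t *: u); rewrite mulmxDr scalemxAr addrAC.
Qed.

Lemma dot_flat c c' w : flat c -> flat c' -> F^T *m w = 0 -> dot (c - c') w = 0.
Proof.
move=> fc fc' Fw; have [s ->] := flat_subP fc fc'.
by rewrite dotE trmx_mul -mulmxA Fw mulmx0 mxE.
Qed.

Hypothesis F_orthonormal : F^T *m F = 1%:M.

Lemma proj_sub_ortho p : F^T *m (proj p - p) = 0.
Proof.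
rewrite /proj -addrA mulmxDr mulmxA F_orthonormal mul1mx -mulmxDr.
by rewrite addrA subrK subrr mulmx0.
Qed.

Lemma norm2_proj c p :
  flat c -> norm2 (c - p) = norm2 (c - proj p) + norm2 (proj p - p).
Proof.
move=> fc; have -> : c - p = (c - proj p) + (proj p - p) by rewrite addrA subrK.
by rewrite norm2D (dot_flat fc (flat_proj p) (proj_sub_ortho p)) mulr0 addr0.
Qed.

Section MaxDist.
Variables p q : 'cV[R]_n.

(* (1 - t, t) are Lagrange multipliers for the two squared distances:
   stationarity along the flat and complementary slackness. *)
Lemma maxdist2_argmin cs t :
  flat cs -> 0 <= t <= 1 ->
  F^T *m ((1 - t) *: (cs - p) + t *: (cs - q)) = 0 ->
  (1 - t) * norm2 (cs - p) + t * norm2 (cs - q) = maxdist2 p q cs ->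
  forall c, flat c -> maxdist2 p q cs <= maxdist2 p q c.
Proof.
move=> fcs t01 stationary slack c fc.
apply: le_trans (convex_le_max _ _ t01).
rewrite (convex_norm2_recenter _ cs) slack dot_flat // mulr0 addr0.
by rewrite lerDr norm2_ge0.
Qed.

Lemma proj_argmin :
  norm2 (proj p - q) <= norm2 (proj p - p) ->
  forall c, flat c -> maxdist2 p q (proj p) <= maxdist2 p q c.
Proof.
move=> pq; apply: (maxdist2_argmin (t := 0)); rewrite ?lexx ?ler01 ?subr0 //.
- exact: flat_proj.
- by rewrite scale1r scale0r addr0 proj_sub_ortho.
- by rewrite mul1r mul0r addr0 /maxdist2 (max_idPl pq).
Qed.

Lemma bisector_argmin :
  norm2 (proj p - p) < norm2 (proj p - q) ->
  norm2 (proj q - q) < norm2 (proj q - p) ->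
  exists cs, [/\ flat cs, norm2 (cs - p) = norm2 (cs - q) &
    forall c, flat c -> maxdist2 p q cs <= maxdist2 p q c].
Proof.
set a := proj p; set b := proj q.
set alpha := norm2 (a - p); set beta := norm2 (b - q); set delta := norm2 (b - a).
have fa : flat a := flat_proj p; have fb : flat b := flat_proj q.
rewrite (norm2_proj q fa) (norm2_proj p fb) -/b -/a -/alpha -/beta.
rewrite -[a - b]opprB norm2N -/delta => lt_a lt_b.
have delta_gt0 : 0 < delta by lra.
(* t solves t^2 delta + alpha = (1 - t)^2 delta + beta. *)
set t := (delta + beta - alpha) / (2 * delta).
have tE : t * (2 * delta) = delta + beta - alpha by rewrite mulfVK ?mulf_neq0 ?gt_eqF.
have t01 : 0 <= t <= 1.
  by rewrite divr_ge0 ?ler_pdivrMr ?mul1r ?mulr_ge0 /=; lra.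
set cs := a + t *: (b - a).
have fcs : flat cs := flat_segment t fa fb.
have csa : cs - a = t *: (b - a) by rewrite addrC addKr.
have csb : cs - b = (t - 1) *: (b - a).
  by apply/matrixP => i j; rewrite !mxE; ring.
have dist_p : norm2 (cs - p) = t ^+ 2 * delta + alpha.
  by rewrite (norm2_proj _ fcs) csa norm2Z.
have dist_q : norm2 (cs - q) = (t - 1) ^+ 2 * delta + beta.
  by rewrite (norm2_proj _ fcs) csb norm2Z.
have equi : norm2 (cs - p) = norm2 (cs - q).
  by rewrite dist_p dist_q; lra.
exists cs; split => //; apply: (maxdist2_argmin fcs t01).
  have -> : (1 - t) *: (cs - p) + t *: (cs - q) = (1 - t) *: (a - p) + t *: (b - q).
    by apply/matrixP => i j; rewrite !mxE; ring.
  by rewrite mulmxDr -!scalemxAr !proj_sub_ortho !scaler0 addr0.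
by rewrite /maxdist2 -equi maxxx; ring.
Qed.

End MaxDist.
End Flat.

Lemma affine_solP (R : realType) m n r (A : 'M[R]_(m, n)) b c0 (F : 'M[R]_(n, r)) :
  A *m c0 = b -> (forall c : 'cV_n, A *m c = 0 <-> exists s, c = F *m s) ->
  forall c, A *m c = b <-> flat F c0 c.
Proof.
move=> Ac0 kerA c; split => [Ac | [s ->]].
  have /kerA [s cE] : A *m (c - c0) = 0 by rewrite mulmxBr Ac Ac0 subrr.
  by exists s; rewrite -cE subrK.
by rewrite mulmxDr Ac0 (proj2 (kerA _)) ?add0r //; exists s.
Qed.

Lemma inf_min (R : realType) (E : set R) a :
  E a -> (forall z, E z -> a <= z) -> inf E = a.
Proof.
move=> Ea aE; apply/le_anti/andP; split; first by apply: ge_inf => //; exists a.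
by apply: lb_le_inf => //; exists a.
Qed.

Section RelaxedProblem.
Variables (R : realType) (n : nat).
Implicit Types (c p q : 'cV[R]_n).

Lemma bisectorP c p q :
  ((p - q)^T *m c) 0 0 = 2^-1 * (norm2 p - norm2 q) <->
  norm2 (c - p) = norm2 (c - q).
Proof.
rewrite -dotE dotC -[p - q]/(p + - q) dotDr dotNr !norm2B.
by split => h; lra.
Qed.

Lemma bisectorsP r (v : 'I_r.+1 -> 'cV[R]_n) c :
  (\matrix_(i < r) (v (lift ord0 i) - v ord0)^T) *m c =
    \col_(i < r) (2^-1 * (norm2 (v (lift ord0 i)) - norm2 (v ord0))) <->
  forall i, norm2 (c - v i) = norm2 (c - v ord0).
Proof.
have rowE i : ((\matrix_(i < r) (v (lift ord0 i) - v ord0)^T) *m c) i 0 =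
    ((v (lift ord0 i) - v ord0)^T *m c) 0 0.
  by rewrite !mxE; apply: eq_bigr => j _; rewrite !mxE.
split => [vc i | equi].
  case: (unliftP ord0 i) => [j ->|-> //]; apply/bisectorP.
  by rewrite -rowE vc mxE.
apply/matrixP => i j; rewrite (ord1 j) rowE [RHS]mxE; exact/bisectorP.
Qed.

Variables (l k : nat) (x : 'I_l.+1 -> 'cV[R]_n) (y : 'I_k.+1 -> 'cV[R]_n).

Lemma Amat_bvecP c :
  Amat x y *m c = bvec x y <->
  (forall i, norm2 (c - x i) = norm2 (c - x ord0)) /\
  (forall j, norm2 (c - y j) = norm2 (c - y ord0)).
Proof.
rewrite /Amat /bvec mul_col_mx -(bisectorsP x) -(bisectorsP y).
by split => [/eq_col_mx [] | [-> ->]].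
Qed.

Hypothesis (cs : 'cV[R]_n) (feas_cs : Amat x y *m cs = bvec x y).
Hypothesis argmin_cs : forall c, Amat x y *m c = bvec x y ->
  maxdist2 (x ord0) (y ord0) cs <= maxdist2 (x ord0) (y ord0) c.

Lemma rrel_argmin : rrel x y = Num.sqrt (maxdist2 (x ord0) (y ord0) cs).
Proof.
congr Num.sqrt; apply: inf_min; first by exists cs.
by move=> _ [c feas_c <-]; exact: argmin_cs.
Qed.

Lemma Rcirc_argmin :
  norm2 (cs - x ord0) = norm2 (cs - y ord0) -> Rcirc x y = enorm (cs - x ord0).
Proof.
move=> equi; have [eqx eqy] := proj1 (Amat_bvecP cs) feas_cs.
apply: inf_min => [|z [c [eqcx eqcy]]].
  by exists cs; split => [i|j]; rewrite /enorm ?eqx ?eqy ?equi.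
have equi_c : norm2 (c - x ord0) = norm2 (c - y ord0).
  by apply: enorm_eq_norm2; rewrite eqcx eqcy.
have feas_c : Amat x y *m c = bvec x y.
  by apply/Amat_bvecP; split => [i|j]; apply: enorm_eq_norm2; rewrite ?eqcx ?eqcy.
have := argmin_cs feas_c; rewrite /maxdist2 -equi -equi_c !maxxx.
by rewrite -(eqcx ord0) ler_enorm.
Qed.

End RelaxedProblem.

(* Q_X = {x_0,...,x_l} and Q_Y = {y_0,...,y_k}: the paper's m is l + k + 1. *)
Theorem mainTheorem3 (R : realType) (d l k : nat) (X Y : seq 'cV[R]_d)
    (x : 'I_l.+1 -> 'cV[R]_d) (y : 'I_k.+1 -> 'cV[R]_d)
    (hXY : coupled_general_position X Y)
    (hQ : cosimplex X Y x y)
    (c0 : 'cV[R]_d) (hc0 : Amat x y *m c0 = bvec x y)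
    (F : 'M[R]_(d, d - (l + k)))
    (hFon : F^T *m F = 1%:M)
    (hFker : forall c : 'cV[R]_d, Amat x y *m c = 0 <-> exists s, c = F *m s) :
  let x1 := x ord0 in
  let y1 := y ord0 in
  let sx := F^T *m (x1 - c0) in
  let sy := F^T *m (y1 - c0) in
  let rx_x1 := enorm (F *m sx + c0 - x1) in
  let rx_y1 := enorm (F *m sx + c0 - y1) in
  let ry_x1 := enorm (F *m sy + c0 - x1) in
  let ry_y1 := enorm (F *m sy + c0 - y1) in
  (rx_x1 >= rx_y1 -> rrel x y = rx_x1) /\
  (ry_x1 <= ry_y1 -> rrel x y = ry_y1) /\
  (~ (rx_x1 >= rx_y1) -> ~ (ry_x1 <= ry_y1) -> rrel x y = Rcirc x y).
Proof.
move=> x1 y1 sx sy rx_x1 rx_y1 ry_x1 ry_y1.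
have feasP := affine_solP hc0 hFker.
have rrelE cs : flat F c0 cs ->
    (forall c, flat F c0 c -> maxdist2 x1 y1 cs <= maxdist2 x1 y1 c) ->
    rrel x y = Num.sqrt (maxdist2 x1 y1 cs).
  by move=> /feasP feas_cs argmin; apply: rrel_argmin => // c /feasP; exact: argmin.
split; [|split].
- rewrite /rx_x1 /rx_y1 ler_enorm => le_yx.
  rewrite (rrelE _ (flat_proj F c0 x1) (proj_argmin hFon le_yx)).
  by rewrite /maxdist2 (max_idPl le_yx).
- rewrite /ry_x1 /ry_y1 ler_enorm => le_xy.
  have argmin c : flat F c0 c -> maxdist2 x1 y1 (proj F c0 y1) <= maxdist2 x1 y1 c.
    by rewrite !(maxdist2C x1); exact: (proj_argmin hFon le_xy).
  by rewrite (rrelE _ (flat_proj F c0 y1) argmin) /maxdist2 (max_idPr le_xy).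
- rewrite /rx_x1 /rx_y1 /ry_x1 /ry_y1 !ler_enorm => /negP; rewrite -ltNge => lt_x.
  move=> /negP; rewrite -ltNge => lt_y.
  have [cs [/[dup] flat_cs /feasP feas_cs equi argmin]] :=
    bisector_argmin hFon lt_x lt_y.
  have argmin_feas c :
      Amat x y *m c = bvec x y -> maxdist2 x1 y1 cs <= maxdist2 x1 y1 c.
    by move=> /feasP; exact: argmin.
  rewrite (rrelE _ flat_cs argmin) (Rcirc_argmin feas_cs argmin_feas equi).
  by rewrite /maxdist2 -equi maxxx.
Qed.
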